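(* Let $D$ be an Eulerian digraph (finite, without loops, parallel arcs or digons) which admits a simple dicycle intersection graph, i.e. $D$ has a cycle decomposition $\mathcal{F}(D)$ in which any two distinct dicycles share at most one vertex. Then every vertex of $D$ is a Seymour vertex: $|N^{+2}(v)|\geq |N^{+}(v)|$ for all $v\in V(D)$, i.e. $SV(D)=V(D)$.
   Context: All digraphs are finite, with no loops, no parallel arcs and no digons (a digon is a pair of arcs $u\to w$, $w\to u$); in particular every dicycle has length at least $3$. For a vertex $v$, $N^{+}(v)$ is the set of out-neighbours of $v$, and $N^{+2}(v)$ is the second out-neighbourhood: the set of vertices $w\notin N^{+}(v)\cup\{v\}$ such that $u\to w$ is an arc for some $u\in N^{+}(v)$ (vertices at directed distance exactly $2$ from $v$). A vertex $v$ with $|N^{+2}(v)|\ge |N^{+}(v)|$ is a Seymour vertex, and $SV(D)$ denotes the set of Seymour vertices of $D$. An Eulerian digraph is a (weakly) connected digraph having a closed directed trail using every arc exactly once; equivalently a connected digraph with $d^{+}(v)=d^{-}(v)$ for all $v$. A cycle decomposition $\mathcal{F}(D)$ is a set of dicycles of $D$ whose arc sets partition $A(D)$. The dicycle intersection graph $CI(D)$ associated with $\mathcal{F}(D)$ is the multigraph with vertex set $\mathcal{F}(D)$ having, for each pair of distinct dicycles $C,C'\in\mathcal{F}(D)$ and each vertex of $D$ lying on both $C$ and $C'$, one edge between $C$ and $C'$. $D$ admits a simple dicycle intersection graph if for some cycle decomposition this multigraph has no parallel edges. *)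

From mathcomp Require Import all_boot.
Set Implicit Arguments. Unset Strict Implicit. Unset Printing Implicit Defensive.

Section Digraph.
Variables (T : finType) (e : rel T).

(* A digraph on vertex set T with arc relation e: no loops, no digons
   (parallel arcs are excluded by representing arcs as a relation). *)
Definition simple_digraph : Prop :=
  (forall v, ~~ e v v) /\ (forall u w, e u w -> ~~ e w u).

Definition outdeg (v : T) : nat := #|[set w | e v w]|.
Definition indeg (v : T) : nat := #|[set u | e u v]|.

Definition weakly_connected : Prop :=
  forall x y, connect [rel a b | e a b || e b a] x y.

Definition eulerian : Prop :=
  weakly_connected /\ forall v, outdeg v = indeg v.

Definition dicycle (c : seq T) : bool := [&& c != [::], uniq c & cycle e c].

Definition arc_on (c : seq T) (x y : T) : bool := (x \in c) && (next c x == y).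

Definition cycle_decomposition (F : seq (seq T)) : Prop :=
  (forall c, c \in F -> dicycle c) /\
  (forall x y, e x y -> count (fun c => arc_on c x y) F = 1).

Definition simple_CI (F : seq (seq T)) : Prop :=
  forall i j, i < j < size F ->
    #|[pred v : T | (v \in nth [::] F i) && (v \in nth [::] F j)]| <= 1.

Definition admits_simple_CI : Prop :=
  exists F, cycle_decomposition F /\ simple_CI F.

Definition out_nbhd (v : T) : {set T} := [set w | e v w].

Definition out_nbhd2 (v : T) : {set T} :=
  [set w | [&& w \notin out_nbhd v, w != v & [exists u, e v u && e u w]]].

Definition seymour_vertex (v : T) : bool := #|out_nbhd v| <= #|out_nbhd2 v|.

End Digraph.

From mathcomp Require Import all_boot.

(* For an out-neighbour w of v, let C_w be the dicycle of the decomposition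
   carrying the arc v -> w, and send w to its successor w' on C_w.  Then w' is
   at distance exactly 2 from v: it is not v (no digons), and an arc v -> w'
   would lie on C_w (impossible, since the successor of v on C_w is w) or on
   another dicycle meeting C_w in both v and w'.  The map w |-> w' is injective
   for the same reason: two dicycles C_w1 != C_w2 would share v and w'. *)

Set Implicit Arguments.
Unset Strict Implicit.
Unset Printing Implicit Defensive.

Section SimpleIntersection.
Variables (T : finType) (F : seq (seq T)).
Hypothesis simpleF : simple_CI F.

Lemma simple_CI_common_eq i j a b :
  i < size F -> j < size F -> i != j ->
  a \in nth [::] F i -> a \in nth [::] F j ->
  b \in nth [::] F i -> b \in nth [::] F j -> a = b.
Proof.
move=> iF jF neq_ij.
wlog lt_ij : i j iF jF neq_ij / i < j => [hwlog|].
  have [lt_ij|lt_ji|eq_ij] := ltngtP i j; first exact: hwlog.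
    by move=> aFi aFj bFi bFj; apply: (hwlog j i); rewrite // eq_sym.
  by rewrite eq_ij eqxx in neq_ij.
move=> aFi aFj bFi bFj.
have := simpleF (i := i) (j := j); rewrite lt_ij jF => /(_ isT).
apply: contraTeq => neq_ab; rewrite -ltnNge.
have <- : #|[set a; b]| = 2 by rewrite cards2 neq_ab.
apply: subset_leq_card; apply/subsetP => x.
by rewrite !inE => /orP[] /eqP ->; rewrite ?aFi ?aFj ?bFi ?bFj.
Qed.

End SimpleIntersection.

Section Decomposition.
Variables (T : finType) (e : rel T) (F : seq (seq T)).
Hypothesis decF : cycle_decomposition e F.

Definition carrier (x y : T) : nat := find (fun c => arc_on c x y) F.

Definition carrier_cycle (x y : T) : seq T := nth [::] F (carrier x y).

Lemma carrierP x y : e x y ->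
  carrier x y < size F /\ arc_on (carrier_cycle x y) x y.
Proof.
move=> exy; have hasF : has (fun c => arc_on c x y) F.
  by rewrite has_count (proj2 decF _ _ exy).
by split; [rewrite -has_find | exact: (nth_find [::] hasF)].
Qed.

Lemma carrier_cycle_dicycle x y : e x y -> dicycle e (carrier_cycle x y).
Proof. by move/carrierP=> [xyF _]; apply: (proj1 decF); apply: mem_nth. Qed.

Lemma next_carrier_cycle x y : e x y -> next (carrier_cycle x y) x = y.
Proof. by move/carrierP=> [_ /andP[_ /eqP]]. Qed.

Lemma mem_carrier_cycle_l x y : e x y -> x \in carrier_cycle x y.
Proof. by move/carrierP=> [_ /andP[]]. Qed.

Lemma mem_carrier_cycle_r x y : e x y -> y \in carrier_cycle x y.
Proof.
by move=> exy; rewrite -{1}(next_carrier_cycle exy) mem_next mem_carrier_cycle_l.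
Qed.

Lemma carrier_inj x y1 y2 : e x y1 -> e x y2 ->
  carrier x y1 = carrier x y2 -> y1 = y2.
Proof.
move=> exy1 exy2 eq_c.
rewrite -(next_carrier_cycle exy1) -(next_carrier_cycle exy2).
by rewrite /carrier_cycle eq_c.
Qed.

Definition succ_carrier (v w : T) : T := next (carrier_cycle v w) w.

Lemma mem_succ_carrier v w : e v w -> succ_carrier v w \in carrier_cycle v w.
Proof. by move=> evw; rewrite mem_next mem_carrier_cycle_r. Qed.

Lemma arc_succ_carrier v w : e v w -> e w (succ_carrier v w).
Proof.
move=> evw; have /and3P[_ _ cyc] := carrier_cycle_dicycle evw.
exact: next_cycle cyc (mem_carrier_cycle_r evw).
Qed.

Section SimpleDecomposition.
Hypothesis loopless : forall v, ~~ e v v.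
Hypothesis no_digon : forall u w, e u w -> ~~ e w u.
Hypothesis simpleF : simple_CI F.

Lemma carrier_common_eq v w1 w2 a : e v w1 -> e v w2 ->
  carrier v w1 != carrier v w2 ->
  a \in carrier_cycle v w1 -> a \in carrier_cycle v w2 -> a = v.
Proof.
move=> evw1 evw2 neq_c aC1 aC2.
have [w1F _] := carrierP evw1; have [w2F _] := carrierP evw2.
by apply: (simple_CI_common_eq simpleF w1F w2F neq_c aC1 aC2);
  apply: mem_carrier_cycle_l.
Qed.

Lemma succ_carrier_neq v w : e v w -> succ_carrier v w != v.
Proof.
move=> evw; apply: contraNneq (no_digon evw) => <-.
exact: arc_succ_carrier.
Qed.

Lemma succ_carrier_notin_out_nbhd v w : e v w ->
  succ_carrier v w \notin out_nbhd e v.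
Proof.
move=> evw; rewrite inE; apply/negP => evs.
have [eq_c | neq_c] := eqVneq (carrier v w) (carrier v (succ_carrier v w)).
  move: (arc_succ_carrier evw).
  by rewrite -(carrier_inj evw evs eq_c) (negbTE (loopless w)).
have := succ_carrier_neq evw.
by rewrite (carrier_common_eq evw evs neq_c (mem_succ_carrier evw)
  (mem_carrier_cycle_r evs)) eqxx.
Qed.

Lemma succ_carrier_in_out_nbhd2 v w : w \in out_nbhd e v ->
  succ_carrier v w \in out_nbhd2 e v.
Proof.
rewrite inE => evw; rewrite inE succ_carrier_notin_out_nbhd ?succ_carrier_neq //=.
by apply/existsP; exists w; rewrite evw arc_succ_carrier.
Qed.

Lemma succ_carrier_inj v : {in out_nbhd e v &, injective (succ_carrier v)}.
Proof.
move=> w1 w2; rewrite !inE => evw1 evw2 eq_s.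
have [eq_c | neq_c] := eqVneq (carrier v w1) (carrier v w2).
  exact: carrier_inj evw1 evw2 eq_c.
have succ_C2 : succ_carrier v w1 \in carrier_cycle v w2.
  by rewrite eq_s mem_succ_carrier.
have := succ_carrier_neq evw1.
by rewrite (carrier_common_eq evw1 evw2 neq_c (mem_succ_carrier evw1) succ_C2)
  eqxx.
Qed.

Lemma decomposition_seymour_vertex v : seymour_vertex e v.
Proof.
rewrite /seymour_vertex -(card_in_imset (@succ_carrier_inj v)).
apply/subset_leq_card/subsetP => _ /imsetP[w wN ->].
exact: succ_carrier_in_out_nbhd2.
Qed.

End SimpleDecomposition.
End Decomposition.

Theorem theorem2p1 (T : finType) (e : rel T) :
  simple_digraph e -> eulerian e -> admits_simple_CI e ->
  forall v : T, seymour_vertex e v.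
Proof.
move=> [loopless no_digon] _ [F [decF simpleF]] v.
exact: decomposition_seymour_vertex decF loopless no_digon simpleF v.
Qed.
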